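(* The abelian group $\ell^\infty(\mathbb{Z})_S$ is uniquely divisible, i.e. it admits a (unique) structure of a $\mathbb{Q}$-vector space.
   Context: $\ell^\infty(\mathbb{Z})$ denotes the abelian group of bounded integer-valued sequences $(a_j)_{j\in\mathbb{Z}}$, $S(a_j)_j=(a_{j+1})_j$ is the shift, and $\ell^\infty(\mathbb{Z})_S=\ell^\infty(\mathbb{Z})/\{a-Sa: a\in\ell^\infty(\mathbb{Z})\}$. *)

From mathcomp Require Import all_boot all_order all_algebra.
Set Implicit Arguments. Unset Strict Implicit. Unset Printing Implicit Defensive.
Import Order.TTheory GRing.Theory Num.Theory.
Local Open Scope ring_scope.

Definition zseq := int -> int.

Definition linf (a : zseq) : Prop := exists M : int, forall j : int, `|a j| <= M.

Definition shift (a : zseq) : zseq := fun j => a (j + 1).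

Definition coinv_eq (a b : zseq) : Prop :=
  exists c : zseq, linf c /\ forall j, a j - b j = c j - shift c j.

Definition nmul (n : nat) (a : zseq) : zseq := fun j => a j *+ n.

(* l^oo(Z)_S is uniquely divisible: for every n >= 1, multiplication by n on
   the quotient l^oo(Z)/(1-S)l^oo(Z) is surjective and injective, written on
   representatives. *)
Definition linf_coinv_uniquely_divisible : Prop :=
  forall n : nat, (0 < n)%N ->
    (forall a, linf a -> exists2 b, linf b & coinv_eq (nmul n b) a) /\
    (forall b b', linf b -> linf b' -> coinv_eq (nmul n b) (nmul n b') -> coinv_eq b b').

From mathcomp Require Import all_boot all_order all_algebra.
From mathcomp Require Import zify ring.
Import Order.TTheory GRing.Theory Num.Theory.
Set Implicit Arguments. Unset Strict Implicit. Unset Printing Implicit Defensive.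
Local Open Scope ring_scope.

(* Fix n > 0 and write N = n.  For any integer sequence s, dividing pointwise
   s_j = N q_j + r_j with 0 <= r_j < N gives the identity
        N (q_{j+1} - q_j) = (s_{j+1} - s_j) + (r_j - r_{j+1}),          (E)
   where the remainder sequence r is bounded.
   - Divisibility: given bounded a, take a primitive s of a (s_{j+1}-s_j = a_j)
     and b_j = q_{j+1} - q_j.  By (E), n b - a = r - S r with r bounded, and
     n b = a + r - S r is bounded, hence so is b.
   - Torsion-freeness: if n b - n b' = c - S c with c bounded, then
     c_j = c_{j+1} mod N for all j, so the remainders of c are constant; with
     d = c %/ N, identity (E) becomes N (b - b') = N (d - S d), and d is
     bounded since N d = c - const. *)

Lemma eq_linf (a b : zseq) : (forall j, a j = b j) -> linf a -> linf b.
Proof. by move=> eq_ab [M HM]; exists M => j; rewrite -eq_ab. Qed.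

Lemma linf_const (x : int) : linf (fun=> x).
Proof. by exists `|x|. Qed.

Lemma linfD (a b : zseq) : linf a -> linf b -> linf (fun j => a j + b j).
Proof.
move=> [M HM] [K HK]; exists (M + K) => j.
by apply: le_trans (ler_normD _ _) _; apply: lerD.
Qed.

Lemma linfN (a : zseq) : linf a -> linf (fun j => - a j).
Proof. by move=> [M HM]; exists M => j; rewrite normrN. Qed.

Lemma linf_shift (a : zseq) : linf a -> linf (shift a).
Proof. by move=> [M HM]; exists M => j; apply: HM. Qed.

Lemma shift_invariant_const (T : Type) (f : int -> T) :
  (forall j, f (j + 1) = f j) -> forall j, f j = f 0.
Proof.
move=> f_inv j.
have f_pos (k : nat) : f k%:Z = f 0.
  by elim: k => [|k IH] //; rewrite -IH -[k.+1]addn1 PoszD f_inv.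
have f_neg (k : nat) : f (- k%:Z) = f 0.
  elim: k => [|k IH]; first by rewrite oppr0.
  by rewrite -IH -(f_inv (- k.+1%:Z)); congr f; lia.
by case: j => k; [exact: f_pos | rewrite NegzE f_neg].
Qed.

Fixpoint psum_pos (a : zseq) (k : nat) : int :=
  if k is k'.+1 then psum_pos a k' + a k'%:Z else 0.
Fixpoint psum_neg (a : zseq) (k : nat) : int :=
  if k is k'.+1 then psum_neg a k' - a (- k'.+1%:Z) else 0.
Definition primitive (a : zseq) (j : int) : int :=
  if 0 <= j then psum_pos a (absz j) else psum_neg a (absz j).

Lemma primitiveS (a : zseq) (j : int) :
  primitive a (j + 1) - primitive a j = a j.
Proof.
rewrite /primitive; case: j => k.
  have -> : absz (Posz k + 1) = k.+1 by lia.
  by rewrite /= addrC addKr.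
rewrite NegzE; have -> : (0 <= - k.+1%:Z) = false by lia.
have -> : absz (- k.+1%:Z) = k.+1 by lia.
case: k => [|k]; first by rewrite /=; ring.
have -> : (0 <= - k.+2%:Z + 1) = false by lia.
have -> : absz (- k.+2%:Z + 1) = k.+1 by lia.
by rewrite /=; ring.
Qed.

Lemma diff_divz (N : int) (s : zseq) (j : int) :
  ((s (j + 1) %/ N)%Z - (s j %/ N)%Z) * N
    = s (j + 1) - s j + ((s j %% N)%Z - (s (j + 1) %% N)%Z).
Proof. by rewrite {2}(divz_eq (s j) N) {2}(divz_eq (s (j + 1)) N); ring. Qed.

Section EuclideanDivision.
Variable N : int.
Hypothesis N_gt0 : 0 < N.

Lemma modz_bounds (x : int) : 0 <= (x %% N)%Z < N.
Proof. by rewrite modz_ge0 ?ltz_pmod ?gt_eqF. Qed.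

Lemma linf_modz (s : zseq) : linf (fun j => (s j %% N)%Z).
Proof.
exists N => j; have /andP[r_ge0 r_ltN] := modz_bounds (s j).
by rewrite ger0_norm // ltW.
Qed.

Lemma linf_divN (b : zseq) : linf (fun j => b j * N) -> linf b.
Proof.
move=> [M HM]; exists M => j; apply: le_trans (HM j).
rewrite normrM (gtr0_norm N_gt0) ler_peMr //; lia.
Qed.

End EuclideanDivision.

Lemma nmulE (n : nat) (b : zseq) (j : int) : nmul n b j = b j * n%:Z.
Proof. by rewrite /nmul -mulr_natr natz. Qed.

Lemma linf_coinv_divisible (n : nat) (a : zseq) :
  (0 < n)%N -> linf a -> exists2 b, linf b & coinv_eq (nmul n b) a.
Proof.
move=> n_gt0 a_bd; have N_gt0 : 0 < n%:Z by rewrite ltz_nat.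
pose s := primitive a; pose r j := (s j %% n%:Z)%Z.
pose b j := (s (j + 1) %/ n%:Z)%Z - (s j %/ n%:Z)%Z.
have nb_eq j : b j * n%:Z = a j + (r j - r (j + 1)).
  by rewrite diff_divz // primitiveS.
exists b.
  apply: (linf_divN N_gt0); apply: (eq_linf (fun j => esym (nb_eq j))).
  apply: linfD => //; apply: linfD; first exact: linf_modz.
  exact/linfN/linf_shift/linf_modz.
exists r; split=> [|j]; first exact: linf_modz.
by rewrite nmulE nb_eq addrAC subrr add0r.
Qed.

Lemma linf_coinv_torsionfree (n : nat) (b b' : zseq) :
  (0 < n)%N -> coinv_eq (nmul n b) (nmul n b') -> coinv_eq b b'.
Proof.
move=> n_gt0 [c [c_bd c_cobound]]; have N_gt0 : 0 < n%:Z by rewrite ltz_nat.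
have c_mod_const : forall j, (c j %% n%:Z)%Z = (c 0 %% n%:Z)%Z.
  apply: shift_invariant_const => j; apply/esym/eqP.
  rewrite eqz_mod_dvd -(c_cobound j) !nmulE -mulrBl.
  exact/dvdz_mull/dvdzz.
pose d j := (c j %/ n%:Z)%Z.
exists d; split=> [|j].
  apply: (linf_divN N_gt0); apply: (@eq_linf (fun j => c j - (c 0 %% n%:Z)%Z)).
    by move=> j; rewrite {1}(divz_eq (c j) n%:Z) c_mod_const addrK.
  exact/linfD/linf_const.
have := @diff_divz n%:Z c j; rewrite !c_mod_const subrr addr0 => diff_d.
apply: (mulIf (lt0r_neq0 N_gt0)).
rewrite mulrBl -[b j * _]nmulE -[b' j * _]nmulE c_cobound /shift /d.
by rewrite -[LHS]opprB -diff_d; ring.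
Qed.

Theorem proposition5p3 : linf_coinv_uniquely_divisible.
Proof.
move=> n n_gt0; split.
- by move=> a; exact: linf_coinv_divisible.
- by move=> b b' _ _; exact: linf_coinv_torsionfree.
Qed.
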